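(* Let $A>1$ and let $\mathcal{D}_A=\{(\mathbf f,\mathbf g,\mathbf F,\mathbf G,\mathbf u,\mathbf v)\in\mathbb{R}^6:\ \mathbf u,\mathbf v>0,\ 1\le\mathbf u\mathbf v\le A,\ \mathbf f^2\le\mathbf F\mathbf v,\ \mathbf g^2\le\mathbf G\mathbf u\}$. If $X,X_+,X_-\in\mathcal{D}_A$ and $X=(X_++X_-)/2$, then for every $\theta\in(0,1)$ the point $\theta X_++(1-\theta)X_-$ belongs to $\mathcal{D}_{A'}$, where $A'=9A/8$. *)

From Stdlib Require Import Reals.
Open Scope R_scope.

Record pt6 := mk6 { pf : R; pg : R; pF : R; pG : R; pu : R; pv : R }.

Definition inD (A : R) (X : pt6) : Prop :=
  0 < pu X /\ 0 < pv X /\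
  1 <= pu X * pv X <= A /\
  pf X ^ 2 <= pF X * pv X /\
  pg X ^ 2 <= pG X * pu X.

Definition comb (a : R) (X : pt6) (b : R) (Y : pt6) : pt6 :=
  mk6 (a * pf X + b * pf Y) (a * pg X + b * pg Y) (a * pF X + b * pF Y)
      (a * pG X + b * pG Y) (a * pu X + b * pu Y) (a * pv X + b * pv Y).

From Stdlib Require Import Reals Lra Psatz.
Open Scope R_scope.

(* Write X_t = t X_+ + (1-t) X_-.  Positivity of u_t, v_t is immediate, and
   the two constraints f^2 <= F v and g^2 <= G u survive convex combinations
   because (f, v) |-> f^2 / v is jointly convex (perspective of x^2); this is
   [sq_le_mul_convex].  The only delicate constraint is 1 <= u_t v_t <= 9A/8.
   With a = u_+ v_+, b = u_- v_-, s = u_+ v_- + u_- v_+ one has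
     u_t v_t = t^2 a + (1-t)^2 b + t(1-t) s            [uv_comb_expand].
   Since (u_+ v_-)(u_- v_+) = a b >= 1, AM-GM gives s >= 2, whence
   u_t v_t >= 1 [mix_lower_bound].  The hypothesis that the midpoint lies in
   D_A reads (a + b + s)/4 <= A, i.e. s <= 4A - a - b; substituting this and
   a, b <= A bounds u_t v_t by A(3t - 2t^2) for t >= 1/2, whose maximum on
   [1/2, 1] is 9A/8 at t = 3/4; the case t <= 1/2 is symmetric
   [mix_upper_bound]. *)

(* The gap
   splits as a nonnegative combination of the two input gaps plus the
   Cauchy-Schwarz remainder t(1-t)(f_+ v_- - f_- v_+)^2. *)
Lemma sq_le_mul_convex (t fp fm Fp Fm vp vm : R) :
  0 <= t <= 1 -> 0 < vp -> 0 < vm ->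
  fp ^ 2 <= Fp * vp -> fm ^ 2 <= Fm * vm ->
  (t * fp + (1 - t) * fm) ^ 2 <= (t * Fp + (1 - t) * Fm) * (t * vp + (1 - t) * vm).
Proof.
  intros Ht Hvp Hvm Hp Hm.
  set (dp := Fp * vp - fp ^ 2); set (dm := Fm * vm - fm ^ 2).
  assert (gap_identity :
    ((t * Fp + (1 - t) * Fm) * (t * vp + (1 - t) * vm)
       - (t * fp + (1 - t) * fm) ^ 2) * (vp * vm)
    = (t * vm * (t * vp + (1 - t) * vm)) * dp
      + ((1 - t) * vp * (t * vp + (1 - t) * vm)) * dm
      + t * (1 - t) * (fp * vm - fm * vp) ^ 2)
    by (unfold dp, dm; ring).
  assert (Hw : 0 < t * vp + (1 - t) * vm) by nra.
  assert (Hgap : 0 <= ((t * Fp + (1 - t) * Fm) * (t * vp + (1 - t) * vm)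
                        - (t * fp + (1 - t) * fm) ^ 2) * (vp * vm)).
  { rewrite gap_identity.
    assert (0 <= t * vm * (t * vp + (1 - t) * vm)) by (apply Rmult_le_pos; nra).
    assert (0 <= (1 - t) * vp * (t * vp + (1 - t) * vm)) by (apply Rmult_le_pos; nra).
    assert (0 <= t * (1 - t) * (fp * vm - fm * vp) ^ 2)
      by (apply Rmult_le_pos; [nra | apply pow2_ge_0]).
    assert (0 <= dp) by (unfold dp; lra).
    assert (0 <= dm) by (unfold dm; lra).
    nra. }
  assert (Hpos : 0 < vp * vm) by nra.
  nra.
Qed.

Lemma uv_comb_expand (t up um vp vm : R) :
  (t * up + (1 - t) * um) * (t * vp + (1 - t) * vm)
  = t ^ 2 * (up * vp) + (1 - t) ^ 2 * (um * vm) + t * (1 - t) * (up * vm + um * vp).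
Proof. ring. Qed.

Lemma sum_ge2_of_prod_ge1 (x y : R) :
  0 < x -> 0 < y -> 1 <= x * y -> 2 <= x + y.
Proof.
  intros Hx Hy Hxy.
  assert (Hsq : (x + y) ^ 2 = (x - y) ^ 2 + 4 * (x * y)) by ring.
  assert (4 <= (x + y) ^ 2) by (pose proof (pow2_ge_0 (x - y)); lra).
  nra.
Qed.

(* Lower bound: the mixture of a, b >= 1 and s >= 2 is at least 1, since the
   weights t^2, (1-t)^2, 2t(1-t) sum to 1. *)
Lemma mix_lower_bound (t a b s : R) :
  0 <= t <= 1 -> 1 <= a -> 1 <= b -> 2 <= s ->
  1 <= t ^ 2 * a + (1 - t) ^ 2 * b + t * (1 - t) * s.
Proof.
  intros Ht Ha Hb Hs.
  assert (0 <= t ^ 2 * (a - 1)) by (apply Rmult_le_pos; nra).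
  assert (0 <= (1 - t) ^ 2 * (b - 1)) by (apply Rmult_le_pos; nra).
  assert (0 <= t * (1 - t) * (s - 2)) by (apply Rmult_le_pos; nra).
  nra.
Qed.

(* Upper bound for t >= 1/2: using s <= 4A - a - b, the mixture is at most
   a t(2t-1) + b (1-t)(1-2t) + 4A t(1-t) <= A (3t - 2t^2) <= 9A/8. *)
Lemma mix_upper_bound_right (t a b s A : R) :
  1/2 <= t <= 1 -> 0 <= A -> a <= A -> 0 <= b -> a + b + s <= 4 * A ->
  t ^ 2 * a + (1 - t) ^ 2 * b + t * (1 - t) * s <= 9 * A / 8.
Proof.
  intros Ht HA Ha Hb Hs.
  assert (t * (1 - t) * s <= t * (1 - t) * (4 * A - a - b))
    by (apply Rmult_le_compat_l; nra).
  assert (0 <= (A - a) * (t * (2 * t - 1))) by (apply Rmult_le_pos; nra).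
  assert (0 <= b * ((1 - t) * (2 * t - 1))) by (apply Rmult_le_pos; nra).
  assert (0 <= A * (t - 3/4) ^ 2) by (apply Rmult_le_pos; [lra | apply pow2_ge_0]).
  nra.
Qed.

Lemma mix_upper_bound (t a b s A : R) :
  0 <= t <= 1 -> 0 <= a <= A -> 0 <= b <= A -> a + b + s <= 4 * A ->
  t ^ 2 * a + (1 - t) ^ 2 * b + t * (1 - t) * s <= 9 * A / 8.
Proof.
  intros Ht Ha Hb Hs.
  destruct (Rle_lt_dec (1/2) t) as [Hhi | Hlo].
  - apply mix_upper_bound_right; lra.
  - replace (t ^ 2 * a + (1 - t) ^ 2 * b + t * (1 - t) * s)
      with ((1 - t) ^ 2 * b + (1 - (1 - t)) ^ 2 * a + (1 - t) * (1 - (1 - t)) * s)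
      by ring.
    apply mix_upper_bound_right; lra.
Qed.

Theorem lemma5p1 (A : R) (X Xp Xm : pt6) :
  1 < A ->
  inD A X -> inD A Xp -> inD A Xm ->
  X = comb (1/2) Xp (1/2) Xm ->
  forall theta : R, 0 < theta < 1 ->
  inD (9 * A / 8) (comb theta Xp (1 - theta) Xm).
Proof.
  intros HA HX Hp Hm EX t Ht.
  subst X.
  destruct Xp as [fp gp Fp Gp up vp], Xm as [fm gm Fm Gm um vm].
  unfold inD, comb in *; simpl in *.
  destruct HX as [_ [_ [[_ Hmid] _]]].
  destruct Hp as [Hup [Hvp [[Hp1 Hp2] [Hfp Hgp]]]].
  destruct Hm as [Hum [Hvm [[Hm1 Hm2] [Hfm Hgm]]]].
  assert (Hsum : up * vp + um * vm + (up * vm + um * vp) <= 4 * A).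
  { replace (up * vp + um * vm + (up * vm + um * vp))
      with (4 * ((1/2 * up + 1/2 * um) * (1/2 * vp + 1/2 * vm))) by field.
    lra. }
  assert (Hcross : 2 <= up * vm + um * vp).
  { apply sum_ge2_of_prod_ge1; [nra | nra |].
    replace (up * vm * (um * vp)) with ((up * vp) * (um * vm)) by ring.
    nra. }
  repeat split; try nra.
  - rewrite uv_comb_expand. apply mix_lower_bound; lra.
  - rewrite uv_comb_expand. apply mix_upper_bound; lra.
  - apply sq_le_mul_convex; lra.
  - apply sq_le_mul_convex; lra.
Qed.
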